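(* Let $F(s,r,\boldsymbol t,\bar{\boldsymbol t})$ satisfy the six dispersionless Hirota equations (dH1a)–(dH3b) listed in the context. Then $$\lambda\big(e^{-\partial_sD(\lambda)F}-e^{-\partial_rD(\lambda)F}\big)+\lambda^{-1}\big(e^{\partial_s(\partial_r+\partial_s+D(\lambda))F}-e^{\partial_r(\partial_r+\partial_s+D(\lambda))F}\big)=(\partial_r-\partial_s)\partial_{t_1}F,\quad\text{(dH1c)}$$ $$\lambda^{-1}\big(e^{\partial_s\bar D(\lambda)F}-e^{-\partial_r\bar D(\lambda)F}\big)+\lambda\big(e^{-\partial_s(\partial_r-\partial_s+\bar D(\lambda))F}-e^{\partial_r(\partial_r-\partial_s+\bar D(\lambda))F}\big)=(\partial_r+\partial_s)\partial_{\bar t_1}F,\quad\text{(dH2c)}$$ $$(\partial_r+\partial_s)\partial_{\bar t_1}F=e^{-\partial_r\partial_sF}(\partial_r-\partial_s)\partial_{t_1}F.\quad\text{(dH3c)}$$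
   Context: $F=F(s,r,\boldsymbol t,\bar{\boldsymbol t})$ is a smooth function of continuous variables $s,r$ and $\boldsymbol t=(t_1,t_2,\dots)$, $\bar{\boldsymbol t}=(\bar t_1,\bar t_2,\dots)$. $D(z)=\sum_{n\ge1}\frac{z^{-n}}{n}\partial_{t_n}$, $\bar D(z)=\sum_{n\ge1}\frac{z^n}{n}\partial_{\bar t_n}$; expressions like $\partial_s(\partial_r+D(\lambda))F$ denote derivatives of $F$, and identities are understood as formal series in $\lambda^{-1},\mu^{-1}$ (when $D$ appears) and $\lambda,\mu$ (when $\bar D$ appears), for parameters $\lambda\ne\mu$. The dispersionless Hirota equations are: (dH1a) $e^{D(\lambda)D(\mu)F}=\frac{\lambda e^{-\partial_rD(\lambda)F}-\mu e^{-\partial_rD(\mu)F}}{\lambda-\mu}+\frac1{\lambda\mu}e^{(\partial_s+D(\lambda))(\partial_s+D(\mu))F+\partial_r\partial_sF}$; (dH1b) $e^{D(\lambda)D(\mu)F}=\frac{\lambda e^{-\partial_sD(\lambda)F}-\mu e^{-\partial_sD(\mu)F}}{\lambda-\mu}+\frac1{\lambda\mu}e^{(\partial_r+D(\lambda))(\partial_r+D(\mu))F+\partial_r\partial_sF}$; (dH2a) $e^{\bar D(\lambda)\bar D(\mu)F}=\frac{\lambda^{-1}e^{-\partial_r\bar D(\lambda)F}-\mu^{-1}e^{-\partial_r\bar D(\mu)F}}{\lambda^{-1}-\mu^{-1}}+\lambda\mu\,e^{(-\partial_s+\bar D(\lambda))(-\partial_s+\bar D(\mu))F-\partial_r\partial_sF}$;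 (dH2b) $e^{\bar D(\lambda)\bar D(\mu)F}=\frac{\lambda^{-1}e^{\partial_s\bar D(\lambda)F}-\mu^{-1}e^{\partial_s\bar D(\mu)F}}{\lambda^{-1}-\mu^{-1}}+\lambda\mu\,e^{(\partial_r+\bar D(\lambda))(\partial_r+\bar D(\mu))F-\partial_r\partial_sF}$; (dH3a) $e^{D(\lambda)\bar D(\mu)F}=e^{-(\partial_r+\partial_s)\bar D(\mu)F}-\lambda\mu\,e^{-(\partial_rD(\lambda)+\partial_s\bar D(\mu)+\partial_r\partial_s)F}+\lambda\mu\,e^{(-\partial_s+D(\lambda))(-\partial_s+\bar D(\mu))F-(\partial_r+\partial_s)\partial_sF}$; (dH3b) $e^{D(\lambda)\bar D(\mu)F}=1-\frac{\mu}{\lambda}e^{\partial_s(\partial_s+D(\lambda)-\bar D(\mu))F}+\frac{\mu}{\lambda}e^{(\partial_r+D(\lambda))(\partial_r+\bar D(\mu))F}$. (These arise as the $\hbar\to0$ limit of the difference Fay identities for tau functions of the form $\tau(\hbar^{-1}s,\hbar^{-1}r,\hbar^{-1}\boldsymbol t,\hbar^{-1}\bar{\boldsymbol t})=e^{\hbar^{-2}F+O(\hbar^{-1})}$.) *)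

From Stdlib Require Import Reals ZArith List.
Open Scope R_scope.

(** * Formal power series in two variables u, v (coefficient of u^i v^j). *)
Definition pser := nat -> nat -> R.

Definition pc (c : R) : pser := fun i j =>
  match i, j with O, O => c | _, _ => 0 end.
Definition pone : pser := pc 1.
Definition padd (P Q : pser) : pser := fun i j => P i j + Q i j.
Definition pscal (c : R) (P : pser) : pser := fun i j => c * P i j.
Definition pneg (P : pser) : pser := pscal (-1) P.
Definition psub (P Q : pser) : pser := padd P (pneg Q).
Definition psum (l : list pser) : pser := fold_right padd (pc 0) l.
Definition pmul (P Q : pser) : pser := fun i j =>
  sum_f_R0 (fun a => sum_f_R0 (fun b => P a b * Q (i - a)%nat (j - b)%nat) j) i.
Fixpoint ppow (P : pser) (k : nat) : pser :=
  match k with O => pone | S k' => pmul P (ppow P k') end.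
(** exponential of a formal power series with arbitrary real constant term:
    exp (c + S) = e^c * sum_k S^k / k!  (S without constant term; the sum is
    finite coefficientwise since S^k has no monomials of total degree < k). *)
Definition pexp (P : pser) : pser := fun i j =>
  let S := fun a b => match a, b with O, O => 0 | _, _ => P a b end in
  exp (P O O) * sum_f_R0 (fun k => ppow S k i j / INR (fact k)) (i + j).

(** * Formal Laurent series u^a v^b P(u,v) (supports bounded below). *)
Record lser := LSer { lu : Z; lv : Z; lp : pser }.
Definition coef (L : lser) (i j : Z) : R :=
  if ((lu L <=? i)%Z && (lv L <=? j)%Z)%bool
  then lp L (Z.to_nat (i - lu L)) (Z.to_nat (j - lv L)) else 0.
Definition lof (P : pser) : lser := LSer 0 0 P.
Definition mono (a b : Z) : lser := LSer a b pone.
Definition ladd (L M : lser) : lser :=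
  let a := Z.min (lu L) (lu M) in let b := Z.min (lv L) (lv M) in
  LSer a b (fun i j => coef L (a + Z.of_nat i)%Z (b + Z.of_nat j)%Z
                      + coef M (a + Z.of_nat i)%Z (b + Z.of_nat j)%Z).
Definition lscal (c : R) (L : lser) : lser := LSer (lu L) (lv L) (pscal c (lp L)).
Definition lsub (L M : lser) : lser := ladd L (lscal (-1) M).
Definition lmul (L M : lser) : lser :=
  LSer (lu L + lu M) (lv L + lv M) (pmul (lp L) (lp M)).
Definition leq (L M : lser) : Prop := forall i j, coef L i j = coef M i j.
Definition is_quot (N D Q : lser) : Prop := leq (lmul D Q) N.

(** * The variables s, r, t_1, t_2, ..., tbar_1, tbar_2, ...
    Convention: [Vt n] is t_(n+1) and [Vtb n] is tbar_(n+1). *)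
Inductive var := Vs | Vr | Vt (n : nat) | Vtb (n : nat).
Record pt := Pt { ps : R; pr : R; ptt : nat -> R; pttb : nat -> R }.
Definition upd (f : nat -> R) (n : nat) (h : R) : nat -> R :=
  fun k => if Nat.eqb k n then f k + h else f k.
Definition shift (p : pt) (x : var) (h : R) : pt :=
  match x with
  | Vs => Pt (ps p + h) (pr p) (ptt p) (pttb p)
  | Vr => Pt (ps p) (pr p + h) (ptt p) (pttb p)
  | Vt n => Pt (ps p) (pr p) (upd (ptt p) n h) (pttb p)
  | Vtb n => Pt (ps p) (pr p) (ptt p) (upd (pttb p) n h)
  end.
Definition has_partial (G : pt -> R) (x : var) (p : pt) (l : R) : Prop :=
  derivable_pt_lim (fun h => G (shift p x h)) 0 l.

(** * Series built from the second derivatives [h x y] = d_y d_x F at a point. *)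
Section Ops.
Variable h : var -> var -> R.
(** coefficients of  D(z) d_x F = sum_n z^{-n}/n d_{t_n} d_x F  (V = Vt)
    or of  Dbar(z) d_x F = sum_n z^n/n d_{tbar_n} d_x F  (V = Vtb),
    as a series in the expansion variable (index n = power). *)
Definition Dco (V : nat -> var) (x : var) : nat -> R := fun n =>
  match n with O => 0 | S k => h x (V k) / INR (S k) end.
Definition su (c : nat -> R) : pser := fun i j => match j with O => c i | _ => 0 end.
Definition sv (c : nat -> R) : pser := fun i j => match i with O => c j | _ => 0 end.
Definition Du V x : pser := su (Dco V x).
Definition Dv V x : pser := sv (Dco V x).
(** D_V(u) D_W(v) F = sum_{n,m} u^n v^m/(n m) d_{V n} d_{W m} F *)
Definition DD (V W : nat -> var) : pser := fun i j =>
  match i, j with S a, S b => h (W b) (V a) / (INR (S a) * INR (S b)) | _, _ => 0 end.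
Definition Fss := h Vs Vs.
Definition Frr := h Vr Vr.
Definition Frs := h Vs Vr.
Definition Fsr := h Vr Vs.

(** (dH1a): u = lambda^{-1}, v = mu^{-1}; lambda = u^{-1}, mu = v^{-1}, 1/(lambda mu) = u v *)
Definition dH1a : Prop := exists Q,
  is_quot (lsub (lmul (mono (-1) 0) (lof (pexp (pneg (Du Vt Vr)))))
                (lmul (mono 0 (-1)) (lof (pexp (pneg (Dv Vt Vr))))))
          (lsub (mono (-1) 0) (mono 0 (-1))) Q /\
  leq (lof (pexp (DD Vt Vt)))
      (ladd Q (lmul (mono 1 1)
         (lof (pexp (psum (pc Fss :: Dv Vt Vs :: Du Vt Vs :: DD Vt Vt :: pc Frs :: nil)))))).
Definition dH1b : Prop := exists Q,
  is_quot (lsub (lmul (mono (-1) 0) (lof (pexp (pneg (Du Vt Vs)))))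
                (lmul (mono 0 (-1)) (lof (pexp (pneg (Dv Vt Vs))))))
          (lsub (mono (-1) 0) (mono 0 (-1))) Q /\
  leq (lof (pexp (DD Vt Vt)))
      (ladd Q (lmul (mono 1 1)
         (lof (pexp (psum (pc Frr :: Dv Vt Vr :: Du Vt Vr :: DD Vt Vt :: pc Frs :: nil)))))).
(** (dH2a),(dH2b): u = lambda, v = mu; lambda^{-1} = u^{-1}, lambda mu = u v *)
Definition dH2a : Prop := exists Q,
  is_quot (lsub (lmul (mono (-1) 0) (lof (pexp (pneg (Du Vtb Vr)))))
                (lmul (mono 0 (-1)) (lof (pexp (pneg (Dv Vtb Vr))))))
          (lsub (mono (-1) 0) (mono 0 (-1))) Q /\
  leq (lof (pexp (DD Vtb Vtb)))
      (ladd Q (lmul (mono 1 1)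
         (lof (pexp (psum (pc Fss :: pneg (Dv Vtb Vs) :: pneg (Du Vtb Vs)
                           :: DD Vtb Vtb :: pc (- Frs) :: nil)))))).
Definition dH2b : Prop := exists Q,
  is_quot (lsub (lmul (mono (-1) 0) (lof (pexp (Du Vtb Vs))))
                (lmul (mono 0 (-1)) (lof (pexp (Dv Vtb Vs)))))
          (lsub (mono (-1) 0) (mono 0 (-1))) Q /\
  leq (lof (pexp (DD Vtb Vtb)))
      (ladd Q (lmul (mono 1 1)
         (lof (pexp (psum (pc Frr :: Dv Vtb Vr :: Du Vtb Vr
                           :: DD Vtb Vtb :: pc (- Frs) :: nil)))))).
(** (dH3a),(dH3b): u = lambda^{-1}, v = mu; lambda mu = u^{-1} v, mu/lambda = u v *)
Definition dH3a : Prop :=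
  leq (lof (pexp (DD Vt Vtb)))
      (ladd (lsub (lof (pexp (padd (pneg (Dv Vtb Vr)) (pneg (Dv Vtb Vs)))))
                  (lmul (mono (-1) 1)
                     (lof (pexp (psum (pneg (Du Vt Vr) :: pneg (Dv Vtb Vs)
                                       :: pc (- Frs) :: nil))))))
            (lmul (mono (-1) 1)
               (lof (pexp (psum (pc Fss :: pneg (Dv Vtb Vs) :: pneg (Du Vt Vs)
                                 :: DD Vt Vtb :: pc (- Frs) :: pc (- Fss) :: nil)))))).
Definition dH3b : Prop :=
  leq (lof (pexp (DD Vt Vtb)))
      (ladd (lsub (lof pone)
                  (lmul (mono 1 1)
                     (lof (pexp (psum (pc Fss :: Du Vt Vs :: pneg (Dv Vtb Vs) :: nil))))))
            (lmul (mono 1 1)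
               (lof (pexp (psum (pc Frr :: Dv Vtb Vr :: Du Vt Vr :: DD Vt Vtb :: nil)))))).

(** (dH1c): one-variable series in u = lambda^{-1} *)
Definition dH1c : Prop :=
  leq (ladd (lmul (mono (-1) 0)
               (lsub (lof (pexp (pneg (Du Vt Vs)))) (lof (pexp (pneg (Du Vt Vr))))))
            (lmul (mono 1 0)
               (lsub (lof (pexp (psum (pc Fsr :: pc Fss :: Du Vt Vs :: nil))))
                     (lof (pexp (psum (pc Frr :: pc Frs :: Du Vt Vr :: nil)))))))
      (lof (pc (h (Vt 0) Vr - h (Vt 0) Vs))).
(** (dH2c): one-variable series in u = lambda *)
Definition dH2c : Prop :=
  leq (ladd (lmul (mono (-1) 0)
               (lsub (lof (pexp (Du Vtb Vs))) (lof (pexp (pneg (Du Vtb Vr))))))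
            (lmul (mono 1 0)
               (lsub (lof (pexp (psum (pc (- Fsr) :: pc Fss :: pneg (Du Vtb Vs) :: nil))))
                     (lof (pexp (psum (pc Frr :: pc (- Frs) :: Du Vtb Vr :: nil)))))))
      (lof (pc (h (Vtb 0) Vr + h (Vtb 0) Vs))).
Definition dH3c : Prop :=
  h (Vtb 0) Vr + h (Vtb 0) Vs = exp (- Frs) * (h (Vt 0) Vr - h (Vt 0) Vs).
End Ops.

From Stdlib Require Import Reals Lia Lra ZArith.
Open Scope R_scope.

(** All six equations (dH1a)-(dH3b) are identities between formal Laurent
    series whose coefficients are second derivatives of F at a fixed point,
    so the theorem is pointwise and purely algebraic; of the derivative data
    only the symmetry of second derivatives is used.

    - (dH1a), (dH1b), (dH2a), (dH2b) share one shape ([fay_shape]):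
        L(u,v) = [u^-1 A(u) - v^-1 B(v)] / (u^-1 - v^-1) + u v e^{E(u,v)}.
      Since the quotient Q is a Laurent series, the relation
      (u^-1 - v^-1) Q = u^-1 A - v^-1 B forces its u^(k+1) v coefficient to
      be -A_(k+2), so the u^(k+1) v coefficient of the identity reads
      L_(k+1,1) = -A_(k+2) + (e^E)_(k,0)   ([fay_mixed_coef]).
    - (dH1a) and (dH1b) have the same L; subtracting these coefficient
      identities gives the u^(k+1) coefficient of (dH1c); its u^-1 and u^0
      coefficients are computed directly ([u_identity_of_coefs]).  Only the
      v^0 parts of the exponents matter ([pexp_same_v0]).  Likewise (dH2c)
      follows from (dH2a), (dH2b).
    - (dH3c) is the u^0 v coefficient of (dH3a). *)

Lemma sum_zero (f : nat -> R) n :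
  (forall k, (k <= n)%nat -> f k = 0) -> sum_f_R0 f n = 0.
Proof.
  induction n; intros H; simpl.
  - apply H; lia.
  - rewrite IHn, H by (intros; try apply H; lia). ring.
Qed.

Lemma sum_first (f : nat -> R) n :
  (forall k, (1 <= k)%nat -> f k = 0) -> sum_f_R0 f n = f 0%nat.
Proof.
  induction n; intros H; simpl; [reflexivity|].
  rewrite IHn, (H (S n)) by (auto; lia). ring.
Qed.

Lemma sum_delta (x : nat -> R) m n :
  sum_f_R0 (fun k => if Nat.eqb k m then x k else 0) n
  = if Nat.leb m n then x m else 0.
Proof.
  induction n.
  - destruct m; reflexivity.
  - rewrite tech5, IHn.
    destruct (Nat.eqb_spec (S n) m), (Nat.leb_spec m n), (Nat.leb_spec m (S n));
      subst; try lia; ring.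
Qed.

Lemma sum2_delta (x : nat -> nat -> R) a0 b0 i j :
  sum_f_R0 (fun a => sum_f_R0 (fun b =>
     if Nat.eqb a a0 then if Nat.eqb b b0 then x a b else 0 else 0) j) i
  = if (Nat.leb a0 i && Nat.leb b0 j)%bool then x a0 b0 else 0.
Proof.
  rewrite (sum_eq _ (fun a => if Nat.eqb a a0
                              then (if Nat.leb b0 j then x a b0 else 0) else 0)).
  - rewrite sum_delta. destruct (Nat.leb a0 i); reflexivity.
  - intros a _. destruct (Nat.eqb a a0).
    + apply (sum_delta (fun b => x a b)).
    + apply sum_zero; auto.
Qed.

Lemma coef_lof_nat P i j : coef (lof P) (Z.of_nat i) (Z.of_nat j) = P i j.
Proof.
  unfold coef, lof; simpl. rewrite !Z.sub_0_r, !Nat2Z.id.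
  replace (0 <=? Z.of_nat i)%Z with true by (symmetry; apply Z.leb_le; lia).
  replace (0 <=? Z.of_nat j)%Z with true by (symmetry; apply Z.leb_le; lia).
  reflexivity.
Qed.

Lemma coef_below L i j : (i < lu L \/ j < lv L)%Z -> coef L i j = 0.
Proof.
  intros H. unfold coef.
  destruct (Z.leb_spec (lu L) i), (Z.leb_spec (lv L) j); simpl; auto; lia.
Qed.

Lemma coef_lof_neg P i j : (i < 0 \/ j < 0)%Z -> coef (lof P) i j = 0.
Proof. intros H. apply coef_below. exact H. Qed.

Lemma coef_ladd L M i j : coef (ladd L M) i j = coef L i j + coef M i j.
Proof.
  unfold coef at 1. unfold ladd; simpl.
  destruct (Z.leb_spec (Z.min (lu L) (lu M)) i),
           (Z.leb_spec (Z.min (lv L) (lv M)) j); simpl.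
  - rewrite !Z2Nat.id by lia. do 2 f_equal; lia.
  - rewrite !coef_below by lia. ring.
  - rewrite !coef_below by lia. ring.
  - rewrite !coef_below by lia. ring.
Qed.

Lemma coef_lscal c L i j : coef (lscal c L) i j = c * coef L i j.
Proof.
  unfold coef, lscal; simpl.
  destruct ((lu L <=? i)%Z && (lv L <=? j)%Z)%bool; unfold pscal; ring.
Qed.

Lemma coef_lsub L M i j : coef (lsub L M) i j = coef L i j - coef M i j.
Proof. unfold lsub. rewrite coef_ladd, coef_lscal. ring. Qed.

Lemma pmul_pone_l P i j : pmul pone P i j = P i j.
Proof.
  unfold pmul. rewrite sum_first.
  - rewrite sum_first.
    + unfold pone, pc. rewrite !Nat.sub_0_r. ring.
    + intros [|k] Hk; [lia|]. unfold pone, pc. ring.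
  - intros [|k] Hk; [lia|]. apply sum_zero. intros l _. unfold pone, pc. ring.
Qed.

Lemma coef_mono_mul a b L i j :
  coef (lmul (mono a b) L) i j = coef L (i - a) (j - b).
Proof.
  unfold coef, lmul, mono; simpl.
  destruct (Z.leb_spec (a + lu L) i), (Z.leb_spec (lu L) (i - a)),
           (Z.leb_spec (b + lv L) j), (Z.leb_spec (lv L) (j - b));
    simpl; try lia; auto.
  rewrite pmul_pone_l. do 2 f_equal; lia.
Qed.

Lemma coef_mono x y i j :
  coef (mono x y) i j = if (Z.eqb i x && Z.eqb j y)%bool then 1 else 0.
Proof.
  unfold coef, mono; simpl. unfold pone, pc.
  destruct (Z.leb_spec x i), (Z.leb_spec y j), (Z.eqb_spec i x), (Z.eqb_spec j y);
    simpl; try lia; auto.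
  - subst. rewrite !Z.sub_diag. reflexivity.
  - subst. rewrite Z.sub_diag. destruct (Z.to_nat (j - y)) eqn:E; [lia|].
    destruct (Z.to_nat (x - x)); auto.
  - destruct (Z.to_nat (i - x)) eqn:E; [lia|]. auto.
  - destruct (Z.to_nat (i - x)) eqn:E; [lia|]. auto.
Qed.

(** The common denominator of (dH1a)-(dH2b): lambda - mu = u^-1 - v^-1.
    Multiplying by it is a difference of two shifts. *)
Definition den : lser := lsub (mono (-1) 0) (mono 0 (-1)).

Lemma den_lp a b :
  lp den a b = (if Nat.eqb a 0 then if Nat.eqb b 1 then 1 else 0 else 0)
             - (if Nat.eqb a 1 then if Nat.eqb b 0 then 1 else 0 else 0).
Proof.
  unfold den, lsub, ladd. cbn [lp lu lv mono lscal].
  rewrite coef_lscal, !coef_mono.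
  change (Z.min (-1) 0) with (-1)%Z. change (Z.min 0 (-1)) with (-1)%Z.
  destruct a as [|[|a]], b as [|[|b]];
    repeat match goal with |- context [Z.eqb ?x ?y] =>
             destruct (Z.eqb_spec x y); try lia end; simpl; ring.
Qed.

Lemma pmul_den q i j :
  pmul (lp den) q i j =
  (if Nat.leb 1 j then q i (j - 1)%nat else 0)
  - (if Nat.leb 1 i then q (i - 1)%nat j else 0).
Proof.
  unfold pmul.
  rewrite (sum_eq _ (fun a =>
     sum_f_R0 (fun b => if Nat.eqb a 0 then if Nat.eqb b 1
                        then q (i - a)%nat (j - b)%nat else 0 else 0) j
   - sum_f_R0 (fun b => if Nat.eqb a 1 then if Nat.eqb b 0
                        then q (i - a)%nat (j - b)%nat else 0 else 0) j)).
  - rewrite minus_sum, !(sum2_delta (fun a b => q (i - a)%nat (j - b)%nat)).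
    rewrite !Nat.sub_0_r, Bool.andb_true_r. reflexivity.
  - intros a _. rewrite <- minus_sum. apply sum_eq. intros b _. rewrite den_lp.
    destruct (Nat.eqb a 0), (Nat.eqb b 1), (Nat.eqb a 1), (Nat.eqb b 0); ring.
Qed.

Lemma coef_den_mul Q i j :
  coef (lmul den Q) i j = coef Q (i + 1) j - coef Q i (j + 1).
Proof.
  unfold coef at 1. unfold lmul. cbn [lu lv lp].
  change (lu den) with (-1)%Z. change (lv den) with (-1)%Z.
  rewrite pmul_den. unfold coef.
  destruct (Z.leb_spec (-1 + lu Q) i), (Z.leb_spec (-1 + lv Q) j),
           (Z.leb_spec (lu Q) (i + 1)), (Z.leb_spec (lv Q) j),
           (Z.leb_spec (lu Q) i), (Z.leb_spec (lv Q) (j + 1));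
    cbn [andb]; try lia; try ring;
  repeat match goal with |- context [Nat.leb ?x ?y] =>
           destruct (Nat.leb_spec x y) end; try lia; try ring;
  do 2 f_equal; lia.
Qed.

Definition v_free (P : pser) : Prop := forall a b, (1 <= b)%nat -> P a b = 0.
Definition u_free (P : pser) : Prop := forall a b, (1 <= a)%nat -> P a b = 0.

Lemma pmul_v_free P Q : v_free P -> v_free Q -> v_free (pmul P Q).
Proof.
  intros HP HQ i j Hj. unfold pmul. apply sum_zero. intros a _.
  apply sum_zero. intros [|b] Hb.
  - rewrite (HQ _ (j - 0)%nat) by lia. ring.
  - rewrite HP by lia. ring.
Qed.

Lemma pmul_u_free P Q : u_free P -> u_free Q -> u_free (pmul P Q).
Proof.
  intros HP HQ i j Hi. unfold pmul. apply sum_zero. intros [|a] Ha;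
    apply sum_zero; intros b _.
  - rewrite (HQ (i - 0)%nat) by lia. ring.
  - rewrite HP by lia. ring.
Qed.

Lemma ppow_v_free P k : v_free P -> v_free (ppow P k).
Proof.
  intros H; induction k; simpl; [|apply pmul_v_free; auto].
  intros a [|b] Hb; [lia|]. unfold pone, pc. destruct a; reflexivity.
Qed.

Lemma ppow_u_free P k : u_free P -> u_free (ppow P k).
Proof.
  intros H; induction k; simpl; [|apply pmul_u_free; auto].
  intros [|a] b Ha; [lia|]. reflexivity.
Qed.

Lemma pexp_v_free P : v_free P -> v_free (pexp P).
Proof.
  intros H i j Hj. unfold pexp. rewrite sum_zero; [ring|]. intros k _.
  rewrite ppow_v_free; [unfold Rdiv; ring | | exact Hj].
  intros [|a] [|b] Hb; try lia; apply H; lia.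
Qed.

Lemma pexp_u_free P : u_free P -> u_free (pexp P).
Proof.
  intros H i j Hi. unfold pexp. rewrite sum_zero; [ring|]. intros k _.
  rewrite ppow_u_free; [unfold Rdiv; ring | | exact Hi].
  intros [|a] [|b] Ha; try lia; apply H; lia.
Qed.

Lemma v_free_pscal c P : v_free P -> v_free (pscal c P).
Proof. intros H a b Hb. unfold pscal. rewrite H by auto. ring. Qed.

Lemma u_free_pscal c P : u_free P -> u_free (pscal c P).
Proof. intros H a b Ha. unfold pscal. rewrite H by auto. ring. Qed.

Lemma v_free_padd P Q : v_free P -> v_free Q -> v_free (padd P Q).
Proof. intros H H' a b Hb. unfold padd. rewrite H, H' by auto. ring. Qed.

Lemma v_free_su c : v_free (su c).
Proof. intros a [|b] Hb; [lia|]. reflexivity. Qed.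

Lemma u_free_sv c : u_free (sv c).
Proof. intros [|a] b Ha; [lia|]. reflexivity. Qed.

Lemma v_free_pc c : v_free (pc c).
Proof. intros [|a] [|b] Hb; try lia; reflexivity. Qed.

Lemma v_free_lof P i j : v_free P -> (1 <= j)%Z -> coef (lof P) i j = 0.
Proof.
  intros H Hj. destruct (Z_lt_le_dec i 0); [apply coef_lof_neg; lia|].
  replace i with (Z.of_nat (Z.to_nat i)) by lia.
  replace j with (Z.of_nat (Z.to_nat j)) by lia.
  rewrite coef_lof_nat. apply H. lia.
Qed.

Lemma u_free_lof P i j : u_free P -> (1 <= i)%Z -> coef (lof P) i j = 0.
Proof.
  intros H Hi. destruct (Z_lt_le_dec j 0); [apply coef_lof_neg; lia|].
  replace i with (Z.of_nat (Z.to_nat i)) by lia.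
  replace j with (Z.of_nat (Z.to_nat j)) by lia.
  rewrite coef_lof_nat. apply H. lia.
Qed.

Ltac solve_v_free := solve [ unfold pneg, Du; cbn [psum List.fold_right];
  repeat first [ apply pexp_v_free | apply v_free_padd | apply v_free_pscal
               | apply v_free_su | apply v_free_pc ] ].
Ltac solve_u_free := solve [ unfold pneg, Dv;
  repeat first [ apply pexp_u_free | apply u_free_pscal | apply u_free_sv ] ].

(** The v^0 part of a product or exponential only depends on the v^0 parts
    of the factors: this lets us discard every term involving v. *)
Definition same_v0 (P Q : pser) : Prop := forall a, P a 0%nat = Q a 0%nat.

Lemma pmul_same_v0 P P' Q Q' :
  same_v0 P P' -> same_v0 Q Q' -> same_v0 (pmul P Q) (pmul P' Q').
Proof.
  intros HP HQ i. unfold pmul. apply sum_eq. intros a _. simpl.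
  rewrite HP, HQ. reflexivity.
Qed.

Lemma ppow_same_v0 P P' k : same_v0 P P' -> same_v0 (ppow P k) (ppow P' k).
Proof.
  intros H; induction k; simpl; [intros a; reflexivity|]. apply pmul_same_v0; auto.
Qed.

Lemma pexp_same_v0 P P' : same_v0 P P' -> same_v0 (pexp P) (pexp P').
Proof.
  intros H i. unfold pexp. rewrite (H 0%nat). f_equal. apply sum_eq. intros k _.
  rewrite (ppow_same_v0 _ (fun a b => match a, b with O, O => 0 | _, _ => P' a b end));
    [reflexivity|].
  intros [|a]; simpl; auto.
Qed.

Ltac solve_same_v0 := intros [|a];
  unfold psum, List.fold_right, padd, pneg, pscal, pc, Dv, Du, sv, su, DD, Dco;
  ring.

Lemma pexp_00 P : pexp P 0%nat 0%nat = exp (P 0%nat 0%nat).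
Proof. unfold pexp. simpl. unfold pone, pc. field. Qed.

Lemma pexp_10 P : pexp P 1%nat 0%nat = exp (P 0%nat 0%nat) * P 1%nat 0%nat.
Proof. unfold pexp. simpl. unfold pmul, pone, pc. simpl. field. Qed.

Lemma pexp_01 P : pexp P 0%nat 1%nat = exp (P 0%nat 0%nat) * P 0%nat 1%nat.
Proof. unfold pexp. simpl. unfold pmul, pone, pc. simpl. field. Qed.

(** With u = lambda^-1, v = mu^-1 (or
    u = lambda, v = mu), the first term of (dH1a)-(dH2b) is a series Q with
    (u^-1 - v^-1) Q = u^-1 A(u) - v^-1 B(v).  Since Q is a Laurent series
    (bounded below), it is determined by this relation, and its u^(k+1) v
    coefficient is -A_(k+2). *)
Section FayQuotient.
Variables (A B : pser) (Q : lser).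
Hypothesis HA : v_free A.
Hypothesis HB : u_free B.
Hypothesis Hq :
  is_quot (lsub (lmul (mono (-1) 0) (lof A)) (lmul (mono 0 (-1)) (lof B))) den Q.

Lemma quot_recursion i j :
  coef Q (i + 1) j - coef Q i (j + 1)
  = coef (lof A) (i + 1) j - coef (lof B) i (j + 1).
Proof.
  rewrite <- coef_den_mul, Hq, coef_lsub, !coef_mono_mul.
  do 2 f_equal; lia.
Qed.

(** Q has no pure powers u^i, i >= 1: walking down the anti-diagonal the
    coefficients stay equal, and they vanish below the support of Q. *)
Lemma quot_axis_zero i : (1 <= i)%Z -> coef Q i 0 = 0.
Proof.
  intros Hi.
  assert (Hdiag : forall m, coef Q i 0 = coef Q (i + Z.of_nat m) (- Z.of_nat m)).
  { induction m.
    - rewrite Z.add_0_r. reflexivity.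
    - rewrite IHm.
      pose proof (quot_recursion (i + Z.of_nat m) (- Z.of_nat (S m))) as E.
      rewrite coef_lof_neg, u_free_lof in E by (auto; lia).
      replace (- Z.of_nat (S m) + 1)%Z with (- Z.of_nat m)%Z in E by lia.
      replace (i + Z.of_nat m + 1)%Z with (i + Z.of_nat (S m))%Z in E by lia.
      lra. }
  rewrite (Hdiag (Z.to_nat (1 - lv Q))). apply coef_below. lia.
Qed.

Lemma quot_coef_u_v k : coef Q (Z.of_nat (S k)) 1 = - A (S (S k)) 0%nat.
Proof.
  pose proof (quot_recursion (Z.of_nat (S k)) 0) as E.
  rewrite quot_axis_zero, (u_free_lof B) in E by (auto; lia).
  replace (Z.of_nat (S k) + 1)%Z with (Z.of_nat (S (S k))) in E by lia.
  change (0 + 1)%Z with 1%Z in E.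
  rewrite (coef_lof_nat A _ 0) in E. lra.
Qed.

End FayQuotient.

Definition fay_shape (A B L E : pser) : Prop :=
  exists Q,
    is_quot (lsub (lmul (mono (-1) 0) (lof A)) (lmul (mono 0 (-1)) (lof B))) den Q /\
    leq (lof L) (ladd Q (lmul (mono 1 1) (lof (pexp E)))).

Lemma fay_mixed_coef A B L E :
  v_free A -> u_free B -> fay_shape A B L E ->
  forall k, L (S k) 1%nat = - A (S (S k)) 0%nat + pexp E k 0%nat.
Proof.
  intros HA HB [Q [Hq HL]] k.
  specialize (HL (Z.of_nat (S k)) (Z.of_nat 1)).
  rewrite coef_lof_nat, coef_ladd, coef_mono_mul, (quot_coef_u_v A B Q) in HL by auto.
  replace (Z.of_nat (S k) - 1)%Z with (Z.of_nat k) in HL by lia.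
  change (Z.of_nat 1 - 1)%Z with (Z.of_nat 0) in HL.
  rewrite coef_lof_nat in HL. exact HL.
Qed.

(** Two Fay identities L = -A_i + e^{E_i} (i = 1, 2) with the same left-hand
    side L: comparing their u^(k+1) v coefficients eliminates L.  The
    exponents may be replaced by any series Z_i with the same v^0 part. *)
Lemma fay_pair_difference A1 A2 B1 B2 L E1 E2 Z1 Z2 :
  fay_shape A1 B1 L E1 -> fay_shape A2 B2 L E2 ->
  v_free A1 -> v_free A2 -> u_free B1 -> u_free B2 ->
  same_v0 Z1 E1 -> same_v0 Z2 E2 ->
  forall k, A1 (S (S k)) 0%nat - A2 (S (S k)) 0%nat
            + pexp Z2 k 0%nat - pexp Z1 k 0%nat = 0.
Proof.
  intros H1 H2 HA1 HA2 HB1 HB2 HZ1 HZ2 k.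
  pose proof (fay_mixed_coef _ _ _ _ HA1 HB1 H1 k) as K1.
  pose proof (fay_mixed_coef _ _ _ _ HA2 HB2 H2 k) as K2.
  rewrite (pexp_same_v0 _ _ HZ1), (pexp_same_v0 _ _ HZ2). lra.
Qed.

Lemma u_identity_of_coefs X1 X2 Y1 Y2 c :
  v_free X1 -> v_free X2 -> v_free Y1 -> v_free Y2 ->
  X1 0%nat 0%nat = X2 0%nat 0%nat ->
  X1 1%nat 0%nat - X2 1%nat 0%nat = c ->
  (forall k, X1 (S (S k)) 0%nat - X2 (S (S k)) 0%nat
             + Y1 k 0%nat - Y2 k 0%nat = 0) ->
  leq (ladd (lmul (mono (-1) 0) (lsub (lof X1) (lof X2)))
            (lmul (mono 1 0) (lsub (lof Y1) (lof Y2))))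
      (lof (pc c)).
Proof.
  intros HX1 HX2 HY1 HY2 Hm1 H0 Hk i j.
  rewrite coef_ladd, !coef_mono_mul, !coef_lsub.
  destruct (Z_lt_le_dec j 0); [rewrite !coef_lof_neg by lia; ring|].
  destruct (Z_lt_le_dec 0 j).
  { rewrite !v_free_lof by (auto using v_free_pc; lia). ring. }
  replace j with 0%Z by lia. rewrite Z.sub_0_r.
  destruct (Z_lt_le_dec i (-1)); [rewrite !coef_lof_neg by lia; ring|].
  replace i with (Z.of_nat (Z.to_nat (i + 1)) - 1)%Z by lia.
  generalize (Z.to_nat (i + 1)); intros n.
  replace (Z.of_nat n - 1 - -1)%Z with (Z.of_nat n) by lia.
  change 0%Z with (Z.of_nat 0). rewrite !coef_lof_nat.
  destruct n as [|[|k]].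
  - rewrite !coef_lof_neg by lia. lra.
  - rewrite !coef_lof_neg by lia.
    change (Z.of_nat 1 - 1)%Z with (Z.of_nat 0). rewrite coef_lof_nat. simpl. lra.
  - replace (Z.of_nat (S (S k)) - 1 - 1)%Z with (Z.of_nat k) by lia.
    replace (Z.of_nat (S (S k)) - 1)%Z with (Z.of_nat (S k)) by lia.
    rewrite !coef_lof_nat. simpl. specialize (Hk k). lra.
Qed.

Lemma dH1a_shape (h : var -> var -> R) :
  dH1a h -> fay_shape (pexp (pneg (Du h Vt Vr))) (pexp (pneg (Dv h Vt Vr)))
                      (pexp (DD h Vt Vt))
    (psum (pc (Fss h) :: Dv h Vt Vs :: Du h Vt Vs :: DD h Vt Vt :: pc (Frs h) :: nil)).
Proof. exact (fun H => H). Qed.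

Lemma dH1b_shape (h : var -> var -> R) :
  dH1b h -> fay_shape (pexp (pneg (Du h Vt Vs))) (pexp (pneg (Dv h Vt Vs)))
                      (pexp (DD h Vt Vt))
    (psum (pc (Frr h) :: Dv h Vt Vr :: Du h Vt Vr :: DD h Vt Vt :: pc (Frs h) :: nil)).
Proof. exact (fun H => H). Qed.

(** (dH1c): compare the u^(k+1) v coefficients of (dH1a) and (dH1b); the
    symmetry d_s d_r F = d_r d_s F identifies the constant terms of the
    exponents. *)
Lemma dH1c_of_fay (h : var -> var -> R) :
  (forall x y, h x y = h y x) -> dH1a h -> dH1b h -> dH1c h.
Proof.
  intros Hs Ha Hb. unfold dH1c.
  apply u_identity_of_coefs; [solve_v_free .. | | | ].
  - rewrite !pexp_00. unfold pneg, pscal, Du, su, Dco. ring.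
  - rewrite !pexp_10. unfold pneg, pscal, Du, su, Dco.
    rewrite (Hs Vs), (Hs Vr), Rmult_0_r, exp_0. simpl. field.
  - unfold Fsr. rewrite (Hs Vr Vs). fold (Frs h).
    apply (fay_pair_difference _ _ _ _ _ _ _ _ _ (dH1b_shape h Hb) (dH1a_shape h Ha));
      first [solve_v_free | solve_u_free | solve_same_v0].
Qed.

Lemma dH2a_shape (h : var -> var -> R) :
  dH2a h -> fay_shape (pexp (pneg (Du h Vtb Vr))) (pexp (pneg (Dv h Vtb Vr)))
                      (pexp (DD h Vtb Vtb))
    (psum (pc (Fss h) :: pneg (Dv h Vtb Vs) :: pneg (Du h Vtb Vs)
           :: DD h Vtb Vtb :: pc (- Frs h) :: nil)).
Proof. exact (fun H => H). Qed.

Lemma dH2b_shape (h : var -> var -> R) :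
  dH2b h -> fay_shape (pexp (Du h Vtb Vs)) (pexp (Dv h Vtb Vs))
                      (pexp (DD h Vtb Vtb))
    (psum (pc (Frr h) :: Dv h Vtb Vr :: Du h Vtb Vr
           :: DD h Vtb Vtb :: pc (- Frs h) :: nil)).
Proof. exact (fun H => H). Qed.

Lemma dH2c_of_fay (h : var -> var -> R) :
  (forall x y, h x y = h y x) -> dH2a h -> dH2b h -> dH2c h.
Proof.
  intros Hs Ha Hb. unfold dH2c.
  apply u_identity_of_coefs; [solve_v_free .. | | | ].
  - rewrite !pexp_00. unfold pneg, pscal, Du, su, Dco. rewrite Rmult_0_r. reflexivity.
  - rewrite !pexp_10. unfold pneg, pscal, Du, su, Dco.
    rewrite (Hs Vs), (Hs Vr), Rmult_0_r, exp_0. simpl. field.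
  - unfold Fsr. rewrite (Hs Vr Vs). fold (Frs h).
    apply (fay_pair_difference _ _ _ _ _ _ _ _ _ (dH2b_shape h Hb) (dH2a_shape h Ha));
      first [solve_v_free | solve_u_free | solve_same_v0].
Qed.

(** (dH3c) is the u^0 v coefficient of (dH3a): the left-hand side has none,
    the first exponential contributes -(d_r + d_s) d_tbar1 F, and the two
    u^-1 v terms contribute e^{-d_r d_s F} (d_r - d_s) d_t1 F. *)
Lemma dH3c_of_fay (h : var -> var -> R) :
  (forall x y, h x y = h y x) -> dH3a h -> dH3c h.
Proof.
  intros Hs H. specialize (H (Z.of_nat 0) (Z.of_nat 1)). unfold lsub in H.
  rewrite !coef_ladd, !coef_lscal, !coef_mono_mul in H.
  change (Z.of_nat 0 - -1)%Z with (Z.of_nat 1) in H.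
  change (Z.of_nat 1 - 1)%Z with (Z.of_nat 0) in H.
  rewrite !coef_lof_nat, !pexp_01, !pexp_10 in H.
  unfold psum, List.fold_right, padd, pc, pneg, pscal, Dv, Du, sv, su, DD, Dco in H.
  unfold dH3c. rewrite (Hs (Vtb 0)), (Hs (Vtb 0)), (Hs (Vt 0)), (Hs (Vt 0)).
  replace (Fss h + (-1 * 0 + (-1 * 0 + (0 + (- Frs h + (- Fss h + 0))))))
    with (-1 * 0 + (-1 * 0 + (- Frs h + 0))) in H by ring.
  replace (-1 * 0 + -1 * 0) with 0 in H by ring.
  replace (-1 * 0 + (-1 * 0 + (- Frs h + 0))) with (- Frs h) in H by ring.
  rewrite exp_0 in H. simpl INR in H. lra.
Qed.

Theorem theorem6
  (F : pt -> R) (F1 : var -> pt -> R) (F2 : var -> var -> pt -> R)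
  (HF1 : forall x p, has_partial F x p (F1 x p))
  (HF2 : forall x y p, has_partial (F1 x) y p (F2 x y p))
  (Hsym : forall x y p, F2 x y p = F2 y x p)
  (H1a : forall p, dH1a (fun x y => F2 x y p))
  (H1b : forall p, dH1b (fun x y => F2 x y p))
  (H2a : forall p, dH2a (fun x y => F2 x y p))
  (H2b : forall p, dH2b (fun x y => F2 x y p))
  (H3a : forall p, dH3a (fun x y => F2 x y p))
  (H3b : forall p, dH3b (fun x y => F2 x y p)) :
  forall p, dH1c (fun x y => F2 x y p) /\ dH2c (fun x y => F2 x y p)
            /\ dH3c (fun x y => F2 x y p).
Proof.
  intros p.
  assert (Hs : forall x y, F2 x y p = F2 y x p) by (intros; apply Hsym).
  split; [|split].
  - apply dH1c_of_fay; auto.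
  - apply dH2c_of_fay; auto.
  - apply dH3c_of_fay; auto.
Qed.
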